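(* For all $k,\ell\in\mathbb Z$, in $\mathbb C_w[x,x^{-1},y,y^{-1}]$, \[ y^k x^\ell=\Big(\prod_{i=1}^\ell\prod_{j=1}^k w(i,j)\Big)x^\ell y^k=\Big(\prod_{i=1}^\ell W(i,k)\Big)x^\ell y^k . \]
   Context: Let $(w(s,t))_{s,t\in\mathbb Z}$ be commuting invertible variables. $\mathbb C_w[x,x^{-1},y,y^{-1}]$ is the associative unital $\mathbb C$-algebra generated by $x,x^{-1},y,y^{-1}$ and the $w(s,t)^{\pm1}$ subject to $x^{-1}x=xx^{-1}=1$, $y^{-1}y=yy^{-1}=1$, $yx=w(1,1)xy$, $x\,w(s,t)=w(s+1,t)\,x$, $y\,w(s,t)=w(s,t+1)\,y$ for all $s,t\in\mathbb Z$. Product convention: $\prod_{j=l}^m A_j=A_l\cdots A_m$ if $m>l-1$, $=1$ if $m=l-1$, $=A_{l-1}^{-1}A_{l-2}^{-1}\cdots A_{m+1}^{-1}$ if $m<l-1$. $W(s,t)=\prod_{j=1}^t w(s,j)$. *)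

From HB Require Import structures.
From mathcomp Require Import all_boot all_order all_algebra.
Set Implicit Arguments. Unset Strict Implicit. Unset Printing Implicit Defensive.
Import Order.TTheory GRing.Theory Num.Theory.
Local Open Scope ring_scope.

(* Product convention of the paper, for an int-indexed family A:
   prod_{j=l}^m A_j = A_l * ... * A_m                       if m > l-1,
                    = 1                                     if m = l-1,
                    = A_{l-1}^-1 * A_{l-2}^-1 * ... * A_{m+1}^-1  if m < l-1.
   (\prod_(i < n) F i = F 0 * F 1 * ... * F (n-1), in this order.) *)
Definition zprod (R : unitRingType) (l m : int) (A : int -> R) : R :=
  if (l - 1 <= m)%R then (\prod_(i < absz (m - l + 1)%R) A (l + (i : nat)%:Z))%R
  else (\prod_(i < absz (l - 1 - m)%R) (A (l - 1 - (i : nat)%:Z))^-1)%R.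

Definition Wp (R : unitRingType) (w : int -> int -> R) (s t : int) : R :=
  zprod 1 t (fun j => w s j).

(* Each identity is proved by induction over all of Z: as functions of the
   exponent n, both sides satisfy one recurrence f (n + 1) = a n * f n * b n
   with invertible a n, b n, and they agree at n = 0, so they agree everywhere.
   Conjugation by x (resp. y) shifts the first (resp. second) index of w; this
   gives y^k x = W(1,k) x y^k, and moving x^l across W(1,k) turns it into
   W(l+1,k), which is the factor added by the induction step in l. *)

From HB Require Import structures.
From mathcomp Require Import all_boot all_order all_algebra ring.
Set Implicit Arguments. Unset Strict Implicit. Unset Printing Implicit Defensive.
Import Order.TTheory GRing.Theory Num.Theory.
Local Open Scope ring_scope.

Section TwistedCommutation.
Variable R : unitRingType.
Implicit Types (u a b : R) (A B : int -> R).

Lemma int_rec_eq (f g a b : int -> R) :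
  (forall n, a n \is a GRing.unit) -> (forall n, b n \is a GRing.unit) ->
  (forall n, f (n + 1) = a n * f n * b n) ->
  (forall n, g (n + 1) = a n * g n * b n) ->
  f 0 = g 0 -> forall n, f n = g n.
Proof.
move=> ua ub fS gS fg0.
have step n : f n = g n <-> f (n + 1) = g (n + 1).
  by rewrite fS gS; split=> [-> // | /(mulIr (ub n)) /(mulrI (ua n))].
elim/int_rect=> [// | n | n] IH.
- by rewrite intS addrC; apply/(step n).
- by apply/(step (- n.+1%:Z)); rewrite intS opprD addrAC addNr add0r.
Qed.

Lemma prodr_intertwine (I : Type) (r : seq I) (P : pred I) u (F G : I -> R) :
  (forall i, P i -> u * F i = G i * u) ->
  u * \prod_(i <- r | P i) F i = \prod_(i <- r | P i) G i * u.
Proof.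
move=> FG; apply: (big_ind2 (fun a b => u * a = b * u)) => //.
  by rewrite mulr1 mul1r.
by move=> a1 b1 a2 b2 h1 h2; rewrite mulrA h1 -mulrA h2 mulrA.
Qed.

Lemma invr_intertwine u a b : a \is a GRing.unit -> b \is a GRing.unit ->
  u * a = b * u -> u * a^-1 = b^-1 * u.
Proof.
move=> ua ub uab; apply: (mulrI ub).
by rewrite mulrA -uab mulrK // mulVKr.
Qed.

Lemma exprz_intertwine u (f : int -> R) : u \is a GRing.unit ->
  (forall s, u * f s = f (s + 1) * u) -> forall n s, u ^ n * f s = f (s + n) * u ^ n.
Proof.
move=> uu uf n s; move: n.
apply: (@int_rec_eq (fun n => u ^ n * f s) (fun n => f (s + n) * u ^ n)
  (fun=> u) (fun=> 1)) => [// | _ | n | n |]; rewrite ?unitr1 ?mulr1 //.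
- by rewrite [n + 1]addrC exprzDr // expr1z mulrA.
- rewrite [n + 1]addrC exprzDr // expr1z !mulrA uf.
  by congr (f _ * _ * _); ring.
- by rewrite expr0z mul1r addr0.
Qed.

Lemma zprod_nat l (n : nat) A :
  zprod l (l - 1 + n) A = \prod_(i < n) A (l + (i : nat)%:Z).
Proof. by rewrite /zprod lerDl (_ : l - 1 + n - l + 1 = n) //; ring. Qed.

Lemma zprod_neg l (n : nat) A :
  zprod l (l - 1 - n.+1%:Z) A = \prod_(i < n.+1) (A (l - 1 - (i : nat)%:Z))^-1.
Proof.
by rewrite /zprod lerDl oppr_ge0 (_ : l - 1 - (l - 1 - n.+1%:Z) = n.+1) //; ring.
Qed.

Lemma zprod_empty l A : zprod l (l - 1) A = 1.
Proof. by rewrite -[l - 1]addr0 zprod_nat big_ord0. Qed.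

Lemma zprodSr l m A : (forall i, A i \is a GRing.unit) ->
  zprod l (m + 1) A = zprod l m A * A (m + 1).
Proof.
move=> uA; have [d ->] : exists d, m = l - 1 + d by exists (m - l + 1); ring.
case: d => [n | [|n]]; rewrite ?NegzE.
- rewrite -addrA [_ + 1]addrC -intS !zprod_nat big_ord_recr /=.
  by congr (_ * A _); rewrite intS; ring.
- by rewrite addrK zprod_empty zprod_neg big_ord1 subr0 mulVr.
- rewrite (_ : l - 1 + - n.+2%:Z + 1 = l - 1 - n.+1%:Z); last by ring.
  by rewrite !zprod_neg [in RHS]big_ord_recr /= divrK.
Qed.

Lemma zprod_unit l m A : (forall i, A i \is a GRing.unit) ->
  zprod l m A \is a GRing.unit.
Proof.
by move=> uA; rewrite /zprod; case: ifP => _; apply: unitr_prod => i _; rewrite ?unitrV.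
Qed.

Lemma zprod_intertwine u l m A B :
  (forall i, A i \is a GRing.unit) -> (forall i, B i \is a GRing.unit) ->
  (forall i, u * A i = B i * u) -> u * zprod l m A = zprod l m B * u.
Proof.
move=> uA uB AB; rewrite /zprod; case: ifP => _; apply: prodr_intertwine => // i _.
exact: invr_intertwine.
Qed.

End TwistedCommutation.

Section QuantumTorus.
Variables (R : unitRingType) (x y : R) (w : int -> int -> R).
Hypotheses (hx : x \is a GRing.unit) (hy : y \is a GRing.unit)
  (hwu : forall s t, w s t \is a GRing.unit)
  (hwc : forall s t s' t', w s t * w s' t' = w s' t' * w s t)
  (hyx : y * x = w 1 1 * x * y)
  (hxw : forall s t, x * w s t = w (s + 1) t * x)
  (hyw : forall s t, y * w s t = w s (t + 1) * y).

Lemma exprz_x_zprod l a b s :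
  x ^ l * zprod a b (w s) = zprod a b (w (s + l)) * x ^ l.
Proof.
apply: zprod_intertwine => // t.
exact: (@exprz_intertwine _ _ (w^~ t) hx (hxw^~ t)).
Qed.

Lemma w_zprod_comm s t a b s' : w s t * zprod a b (w s') = zprod a b (w s') * w s t.
Proof. exact: zprod_intertwine. Qed.

Lemma exprz_y_x k : y ^ k * x = zprod 1 k (w 1) * x * y ^ k.
Proof.
move: k; apply: (@int_rec_eq _ (fun k => y ^ k * x)
  (fun k => zprod 1 k (w 1) * x * y ^ k) (fun k => w 1 (k + 1)) (fun=> y))
  => [// | // | k | k |].
- rewrite exprzDr // expr1z -mulrA hyx !mulrA.
  by rewrite (exprz_intertwine hy (hyw 1)) addrC.
- by rewrite zprodSr // exprzDr // expr1z !mulrA -w_zprod_comm.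
- have := zprod_empty 1 (w 1); rewrite subrr => ->.
  by rewrite expr0z mulr1 mul1r.
Qed.

Lemma exprz_y_exprz_x k l :
  y ^ k * x ^ l = zprod 1 l (fun i => zprod 1 k (w i)) * x ^ l * y ^ k.
Proof.
have uD i : zprod 1 k (w i) \is a GRing.unit by apply: zprod_unit.
move: l; apply: (@int_rec_eq _ (fun l => y ^ k * x ^ l)
  (fun l => zprod 1 l (fun i => zprod 1 k (w i)) * x ^ l * y ^ k)
  (fun=> 1) (fun=> x)) => [_ | // | l | l |]; rewrite ?unitr1 //.
- by rewrite mul1r exprzDr // expr1z mulrA.
- rewrite mul1r -[RHS]mulrA exprz_y_x !mulrA -[_ * x ^ l * _]mulrA exprz_x_zprod.
  by rewrite zprodSr // exprzDr // expr1z !mulrA (addrC 1 l).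
- have := zprod_empty 1 (fun i => zprod 1 k (w i)); rewrite subrr => ->.
  by rewrite !expr0z mulr1 !mul1r.
Qed.

End QuantumTorus.

Theorem lemma2 (R : unitRingType) (x y : R) (w : int -> int -> R)
  (hx : x \is a GRing.unit) (hy : y \is a GRing.unit)
  (hwu : forall s t, w s t \is a GRing.unit)
  (hwc : forall s t s' t', w s t * w s' t' = w s' t' * w s t)
  (hyx : y * x = w 1 1 * x * y)
  (hxw : forall s t, x * w s t = w (s + 1) t * x)
  (hyw : forall s t, y * w s t = w s (t + 1) * y) :
  forall k l : int,
    y ^ k * x ^ l = zprod 1 l (fun i => zprod 1 k (fun j => w i j)) * x ^ l * y ^ k
    /\ y ^ k * x ^ l = zprod 1 l (fun i => Wp w i k) * x ^ l * y ^ k.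
Proof. by move=> k l; split; apply: exprz_y_exprz_x. Qed.
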